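(* For all large enough constants $C_1$ the following holds. Let $n\ge2$, let $V^{(1)},V^{(2)},\ldots$ be iterates of gradient descent $V^{(t+1)}=V^{(t)}-\alpha_t\nabla L_t$ (any initialization, any step-sizes). For any $t\ge1$, if $L_t\le 1/n^{1+C_1}$, then \[ \lVert\nabla L_t\rVert\ge\frac{5L_t\log(1/L_t)}{6\lVert V^{(t)}\rVert}. \]
   Context: $\log$ is the natural logarithm. Standing assumption: $h=1/p$ with $p\ge1$. Huberized ReLU: $\phi(z)=0$ for $z<0$, $z^2/(2h)$ for $z\in[0,h]$, $z-h/2$ for $z>h$. Data $(x_1,y_1),\ldots,(x_n,y_n)$ with $x_s\in\mathbb{R}^{d+1}$, $\lVert x_s\rVert=1$, $y_s\in\{-1,1\}$. For $V\in\mathbb{R}^{2p\times(d+1)}$ with rows $v_1,\ldots,v_{2p}$ and fixed $u_1=\cdots=u_p=1$, $u_{p+1}=\cdots=u_{2p}=-1$: $f_V(x)=\sum_{i=1}^{2p}u_i\phi(v_i\cdot x)$, $L(V)=\frac1n\sum_s\ln(1+\exp(-y_sf_V(x_s)))$. $L_t=L(V^{(t)})$, $\nabla L_t=\nabla_VL|_{V=V^{(t)}}$, and $\lVert\cdot\rVert$ is the Frobenius norm. *)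

From HB Require Import structures.
From mathcomp Require Import all_boot all_order all_algebra.
From mathcomp Require Import all_classical all_reals all_analysis.
From mathcomp Require Import Rstruct Rstruct_topology.


Set Implicit Arguments.
Unset Strict Implicit.
Unset Printing Implicit Defensive.

Import Order.TTheory GRing.Theory Num.Theory.
Local Open Scope ring_scope.

Notation RR := Rdefinitions.R.

Definition hwidth (p : nat) : RR := (p%:R)^-1.

Definition hrelu (h z : RR) : RR :=
  if z < 0 then 0 else if z <= h then z ^+ 2 / (2 * h) else z - h / 2.

Definition uw (p : nat) (i : 'I_(2 * p)) : RR := if (nat_of_ord i < p)%N then 1 else -1.

Definition rowdot (p d : nat) (V : 'M[RR]_(2 * p, d.+1)) (i : 'I_(2 * p))
  (x : 'rV[RR]_(d.+1)) : RR := \sum_(j < d.+1) V i j * x 0 j.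

Definition fnet (p d : nat) (V : 'M[RR]_(2 * p, d.+1)) (x : 'rV[RR]_(d.+1)) : RR :=
  \sum_(i < 2 * p) uw i * hrelu (hwidth p) (rowdot V i x).

Definition loss (n p d : nat) (x : 'I_n -> 'rV[RR]_(d.+1)) (y : 'I_n -> RR)
  (V : 'M[RR]_(2 * p, d.+1)) : RR :=
  (n%:R)^-1 * \sum_(s < n) ln (1 + expR (- (y s * fnet V (x s)))).

Definition gradM (m k : nat) (F : 'M[RR]_(m, k) -> RR) (V : 'M[RR]_(m, k))
  : 'M[RR]_(m, k) :=
  \matrix_(i < m, j < k) derive1 (fun r : RR => (F (V + r *: delta_mx i j) : RR^o)) 0.

Definition frob (m k : nat) (A : 'M[RR]_(m, k)) : RR :=
  Num.sqrt (\sum_(i < m) \sum_(j < k) A i j ^+ 2).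

Definition vnorm (k : nat) (v : 'rV[RR]_k) : RR :=
  Num.sqrt (\sum_(j < k) v 0 j ^+ 2).

(* With m = y f_V(x), l(m) = ln (1 + e^-m) and s(m) = e^-m / (1 + e^-m) = -l'(m), the
   directional derivative of the loss along V itself is
     -<grad L(V), V> = (1/n) sum_s s(m_s) y_s <grad_V f_V(x_s), V>.
   The Huberized ReLU is 1-homogeneous up to a bounded error, 0 <= phi'(z) z - phi(z) <= h/2,
   and the p units of each sign contribute at most p h/2 = 1/2, so y <grad_V f_V(x), V> >= m - 1/2.
   If L <= n^-(1+C1), every sample loss l(m_s) <= n L is tiny: then s(m_s) is close to
   l(m_s) and m_s >= ln(1/L) - ln n - 1 with ln n <= ln(1/L) / 201, which gives
   s(m_s) (m_s - 1/2) >= 5/6 l(m_s) ln(1/L).  Averaging over the samples and applying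
   Cauchy-Schwarz, -<grad L, V> <= |grad L| |V|, concludes.  The bound holds at every V. *)

From HB Require Import structures.
From mathcomp Require Import all_boot all_order all_algebra.
From mathcomp Require Import all_classical all_reals all_analysis.
From mathcomp Require Import Rstruct Rstruct_topology.
From mathcomp Require Import ring lra.

Set Implicit Arguments.
Unset Strict Implicit.
Unset Printing Implicit Defensive.

Import Order.TTheory GRing.Theory Num.Theory.
Local Open Scope ring_scope.

Section Derivatives.
Variable R : realType.

Lemma is_derive_quadratic_remainder (f : R -> R) (z a K : R) :
  (forall w, `|f w - f z - a * (w - z)| <= K * (w - z) ^+ 2) ->
  is_derive z 1 f a.
Proof.
move=> rem; apply/is_derive1_caratheodory.
exists (fun w => if w == z then a else (f w - f z) / (w - z)).
split=> [w||]; last by rewrite eqxx.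
  case: eqP => [->|/eqP]; first by rewrite !subrr mulr0.
  by rewrite -subr_eq0 => /divfK ->.
apply/cvgrPdist_lt => e e_gt0; rewrite eqxx.
have K1_gt0 : 0 < `|K| + 1 by rewrite ltr_wpDl.
near=> w; case: eqP => [_|/eqP w_neq_z]; first by rewrite subrr normr0.
have wz_gt0 : 0 < `|w - z| by rewrite normr_gt0 subr_eq0.
have -> : a - (f w - f z) / (w - z) = - ((f w - f z - a * (w - z)) / (w - z)).
  by field; rewrite subr_eq0.
rewrite normrN normf_div ltr_pdivrMr //.
apply: (le_lt_trans (rem w)); rewrite -[(w - z) ^+ 2]real_normK ?num_real //.
have close : `|w - z| < e / (`|K| + 1).
  rewrite distrC; near: w; apply: cvgr_dist_lt; first exact: cvg_id.
  by rewrite divr_gt0.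
have : `|w - z| * (`|K| + 1) < e by rewrite -ltr_pdivlMr.
have := ler_norm K; nra.
Unshelve. all: by end_near. Qed.

Lemma is_derive_ext (f g : R -> R) (x d : R) :
  f =1 g -> is_derive x 1 f d -> is_derive x 1 g d.
Proof. by move=> /funext <-. Qed.

Lemma is_derive_sum_fun n (F : 'I_n -> R -> R) (x : R) (dF : 'I_n -> R) :
  (forall i, is_derive x 1 (F i) (dF i)) ->
  is_derive x 1 (fun r => \sum_(i < n) F i r) (\sum_(i < n) dF i).
Proof. by move=> dF_; rewrite -fct_sumE; apply: is_derive_sum. Qed.

End Derivatives.

Section LogisticLoss.
Variable R : realType.

Lemma ln_ge1BV (x : R) : 0 < x -> 1 - x^-1 <= ln x.
Proof.
move=> x_gt0; have := @le_ln1Dx _ (x^-1 - 1).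
rewrite (addrC 1) subrK lnV ?posrE // ltrBrDr addNr invr_gt0 => /(_ x_gt0).
lra.
Qed.

Definition logistic_loss (m : R) : R := ln (1 + expR (- m)).

Definition logistic_weight (m : R) : R := expR (- m) / (1 + expR (- m)).

Lemma logistic_loss_gt0 (m : R) : 0 < logistic_loss m.
Proof. by rewrite ln_gt0 // ltrDl expR_gt0. Qed.

Lemma logistic_weight_ge0 (m : R) : 0 <= logistic_weight m.
Proof. by rewrite divr_ge0 // ?addr_ge0 // expR_ge0. Qed.

Lemma is_derive_logistic_loss (m : R) :
  is_derive m 1 logistic_loss (- logistic_weight m).
Proof.
have E1_gt0 : 0 < 1 + expR (- m) by rewrite ltr_wpDr ?expR_ge0.
have dln := is_derive1_ln E1_gt0.
by apply: is_derive_eq; rewrite /logistic_weight add0r mul1r mulrN1 mulrN mulrC.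
Qed.

Lemma logistic_weight_le_loss (m : R) : logistic_weight m <= logistic_loss m.
Proof.
have E1_gt0 : 0 < 1 + expR (- m) by rewrite ltr_wpDr ?expR_ge0.
have -> : logistic_weight m = 1 - (1 + expR (- m))^-1.
  by rewrite /logistic_weight; field; rewrite gt_eqF.
exact: ln_ge1BV.
Qed.

Lemma logistic_loss_le_expRN (m : R) : logistic_loss m <= expR (- m).
Proof. by rewrite le_ln1Dx // (lt_le_trans _ (expR_ge0 _)) // ltrN10. Qed.

Lemma expRN_le_of_small_loss (m a : R) :
  a <= 1 / 2 -> logistic_loss m <= a -> expR (- m) <= 2 * a.
Proof.
move=> a_small /(le_trans (logistic_weight_le_loss m)).
have E_ge0 := expR_ge0 (- m).
rewrite /logistic_weight ler_pdivrMr ?ltr_wpDr //; nra.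
Qed.

(* [lnn] and [lam] stand for ln n and ln (1/L).  Then e^(lnn - lam) <= e^-99 <= 1/100, so
   e^-m <= 1/50 and m >= lam - lnn - 1; as lnn <= lam/201 and lam >= 100, this leaves
   m - 1/2 >= 17/20 lam = 5/6 * 51/50 * lam. *)
Lemma logistic_descent_bound (lnn lam m : R) :
  1 / 2 <= lnn -> 201 * lnn <= lam -> logistic_loss m <= expR (lnn - lam) ->
  5 / 6 * logistic_loss m * lam <= logistic_weight m * (m - 1 / 2).
Proof.
move=> lnn_ge lam_ge small.
set a := expR (lnn - lam) in small.
set E := expR (- m); set l := logistic_loss m.
have a_le : a <= 1 / 100.
  have e99 : 1 + 99 <= expR (99 : R) := expR_ge1Dx _.
  apply: (le_trans (_ : a <= expR (- 99))); first by rewrite ler_expR; lra.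
  by rewrite expRN -div1r ler_pdivrMr ?expR_gt0 //; lra.
have E_le : E <= 2 * a by apply: expRN_le_of_small_loss => //; lra.
have m_ge : lam - lnn - 1 <= m.
  have ln2 : ln (1 + 1 : R) <= 1 by rewrite le_ln1Dx //; lra.
  have : ln E <= ln (2 * a) by rewrite ler_ln ?posrE ?mulr_gt0 ?expR_gt0.
  by rewrite expRK lnM ?posrE ?expR_gt0 // expRK; lra.
have l_le : l <= E := logistic_loss_le_expRN m.
have l_gt0 : 0 < l := logistic_loss_gt0 m.
have E_ge0 : 0 <= E := expR_ge0 _.
have l_E : l * (1 + E) <= E * (51 / 50) by nra.
have lam_m : 17 / 20 * lam <= m - 1 / 2 by lra.
rewrite /logistic_weight -/E [X in _ <= X]mulrAC ler_pdivlMr ?ltr_wpDr //.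
nra.
Qed.

Lemma sample_descent_bound (N L C1 m : R) :
  2 <= N -> 200 <= C1 -> 0 < L -> L <= (N `^ (1 + C1))^-1 ->
  logistic_loss m <= N * L ->
  5 / 6 * logistic_loss m * ln L^-1 <= logistic_weight m * (m - 1 / 2).
Proof.
move=> N_ge2 C1_ge L_gt0 L_small sample_small.
have N_gt0 : 0 < N by lra.
apply: (@logistic_descent_bound (ln N)).
- have : N^-1 <= 1 / 2 by rewrite -div1r ler_pdivrMr //; lra.
  have := ln_ge1BV N_gt0; lra.
- have : ln L <= ln (N `^ (1 + C1))^-1 by rewrite ler_ln ?posrE ?invr_gt0 ?powR_gt0.
  have : 0 <= ln N by rewrite ln_ge0 //; lra.
  rewrite !lnV ?posrE ?powR_gt0 // ln_powR; nra.
- by rewrite lnV ?posrE // opprK -lnM ?posrE // lnK ?posrE ?mulr_gt0.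
Qed.

End LogisticLoss.

Definition mxdot (R : pzRingType) m k (A B : 'M[R]_(m, k)) : R :=
  \sum_(i < m) \sum_(j < k) A i j * B i j.

Lemma linear_mxdotE (R : comPzRingType) m k (phi : 'M[R]_(m, k) -> R) :
  {morph phi : A B / A + B} -> scalable_for *%R phi ->
  forall A, phi A = mxdot A (\matrix_(i, j) phi (delta_mx i j)).
Proof.
move=> phiD phiZ A.
have phi0 : phi 0 = 0 by rewrite -(scale0r 0) phiZ mul0r.
rewrite {1}(matrix_sum_delta A) (big_morph phi phiD phi0); apply: eq_bigr => i _.
by rewrite (big_morph phi phiD phi0); apply: eq_bigr => j _; rewrite phiZ mxE.
Qed.

Section Frobenius.
Variables m k : nat.
Implicit Types A B : 'M[RR]_(m, k).

Lemma frob_ge0 A : 0 <= frob A.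
Proof. exact: sqrtr_ge0. Qed.

Lemma mxdot_self A : mxdot A A = frob A ^+ 2.
Proof.
by rewrite sqr_sqrtr // sumr_ge0 // => i _; rewrite sumr_ge0 // => j _; rewrite sqr_ge0.
Qed.

Lemma frob_eq0 A : frob A = 0 -> A = 0.
Proof.
move=> /eqP; rewrite sqrtr_eq0 => sum_le0.
have sq_ge0 i j : 0 <= A i j ^+ 2 := sqr_ge0 _.
have row_ge0 i : 0 <= \sum_(j < k) A i j ^+ 2 by apply: sumr_ge0 => j _.
have rows0 : \sum_(i < m) \sum_(j < k) A i j ^+ 2 = 0.
  by apply/eqP; rewrite eq_le sum_le0 sumr_ge0.
apply/matrixP => i j; rewrite mxE.
have row0 : \sum_(j < k) A i j ^+ 2 = 0 := psumr_eq0P (fun i _ => row_ge0 i) rows0 isT.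
have : A i j ^+ 2 = 0 := psumr_eq0P (fun j _ => sq_ge0 i j) row0 isT.
by move/eqP; rewrite sqrf_eq0 => /eqP.
Qed.

Lemma mxdotNl A B : mxdot (- A) B = - mxdot A B.
Proof.
rewrite /mxdot -sumrN; apply: eq_bigr => i _; rewrite -sumrN.
by apply: eq_bigr => j _; rewrite mxE mulNr.
Qed.

Lemma frobN A : frob (- A) = frob A.
Proof.
by rewrite /frob; congr Num.sqrt; apply: eq_bigr => i _; apply: eq_bigr => j _; rewrite mxE sqrrN.
Qed.

Lemma mxdot_le_frob A B : mxdot A B <= frob A * frob B.
Proof.
have [A0|A_neq0] := eqVneq (frob A) 0.
  rewrite A0 mul0r (frob_eq0 A0) /mxdot big1 // => i _.
  by rewrite big1 // => j _; rewrite mxE mul0r.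
have [B0|B_neq0] := eqVneq (frob B) 0.
  rewrite B0 mulr0 (frob_eq0 B0) /mxdot big1 // => i _.
  by rewrite big1 // => j _; rewrite mxE mulr0.
have ab_gt0 : 0 < frob A * frob B by rewrite mulr_gt0 // lt_def ?A_neq0 ?B_neq0 frob_ge0.
have : 0 <= \sum_(i < m) \sum_(j < k) (frob B * A i j - frob A * B i j) ^+ 2.
  by rewrite sumr_ge0 // => i _; rewrite sumr_ge0 // => j _; rewrite sqr_ge0.
have -> : \sum_(i < m) \sum_(j < k) (frob B * A i j - frob A * B i j) ^+ 2 =
    frob B ^+ 2 * mxdot A A - 2 * (frob A * frob B) * mxdot A B + frob A ^+ 2 * mxdot B B.
  rewrite /mxdot !mulr_sumr -sumrB -big_split; apply: eq_bigr => i _ /=.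
  by rewrite !mulr_sumr -sumrB -big_split; apply: eq_bigr => j _ /=; ring.
rewrite !mxdot_self; nra.
Qed.

End Frobenius.

Section HuberizedReLU.
Variable h : RR.
Hypothesis h_gt0 : 0 < h.

Definition dhrelu (z : RR) : RR := if z < 0 then 0 else if z <= h then z / h else 1.

Lemma hrelu_scaled (z : RR) :
  2 * h * hrelu h z =
  if z < 0 then 0 else if z <= h then z ^+ 2 else 2 * h * z - h ^+ 2.
Proof.
rewrite /hrelu; case: ifP => _; first by rewrite mulr0.
by case: ifP => _; field; rewrite ?gt_eqF.
Qed.

Lemma dhrelu_scaled (z : RR) :
  2 * h * dhrelu z = if z < 0 then 0 else if z <= h then 2 * z else 2 * h.
Proof.
rewrite /dhrelu; case: ifP => _; first by rewrite mulr0.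
by case: ifP => _; [field; rewrite ?gt_eqF | rewrite mulr1].
Qed.

Lemma hrelu_taylor (z w : RR) :
  `|hrelu h w - hrelu h z - dhrelu z * (w - z)| <= (2 * h)^-1 * (w - z) ^+ 2.
Proof.
have h2_gt0 : 0 < 2 * h by rewrite mulr_gt0.
rewrite -(ler_pM2l h2_gt0) mulrA mulfV ?gt_eqF // mul1r.
rewrite -[2 * h in X in X <= _]gtr0_norm // -normrM.
have -> : 2 * h * (hrelu h w - hrelu h z - dhrelu z * (w - z)) =
    2 * h * hrelu h w - 2 * h * hrelu h z - 2 * h * dhrelu z * (w - z) by ring.
have := sqr_ge0 (w - z); have := sqr_ge0 (w - h).
rewrite !hrelu_scaled dhrelu_scaled ler_norml !expr2.
case: (ltrP w 0) => ?; case: (ltrP z 0) => ?; try case: (lerP w h) => ?;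
  try case: (lerP z h) => ? *; apply/andP; split; nra.
Qed.

(* [RR^o] is [RR] as a normed module over itself, where [gradM] takes its derivatives. *)
Lemma is_derive_hrelu (z : RR) :
  is_derive (z : RR^o) 1 (hrelu h : RR^o -> RR^o) (dhrelu z).
Proof. exact: is_derive_quadratic_remainder (hrelu_taylor z). Qed.

Lemma hrelu_euler_gap (z : RR) : 0 <= dhrelu z * z - hrelu h z <= h / 2.
Proof.
have h2_gt0 : 0 < 2 * h by rewrite mulr_gt0.
have : 0 <= 2 * h * (dhrelu z * z - hrelu h z) <= 2 * h * (h / 2).
  have -> : 2 * h * (h / 2) = h * h by field.
  rewrite mulrBr mulrA hrelu_scaled dhrelu_scaled !expr2.
  by case: (ltrP z 0) => ?; try case: (lerP z h) => ?; apply/andP; split; nra.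
by rewrite pmulr_rge0 // ler_pM2l.
Qed.

End HuberizedReLU.

Section Network.
Variables p d : nat.
Hypothesis p_gt0 : (0 < p)%N.
Implicit Types (V D : 'M[RR]_(2 * p, d.+1)) (xs : 'rV[RR]_d.+1).

Lemma hwidth_gt0 : 0 < hwidth p.
Proof. by rewrite invr_gt0 ltr0n. Qed.

Lemma rowdotD V D i xs : rowdot (V + D) i xs = rowdot V i xs + rowdot D i xs.
Proof. by rewrite /rowdot -big_split; apply: eq_bigr => j _; rewrite mxE mulrDl. Qed.

Lemma rowdotZ c D i xs : rowdot (c *: D) i xs = c * rowdot D i xs.
Proof. by rewrite /rowdot mulr_sumr; apply: eq_bigr => j _; rewrite mxE mulrA. Qed.

Definition dfnet V D xs : RR :=
  \sum_(i < 2 * p) uw i * (dhrelu (hwidth p) (rowdot V i xs) * rowdot D i xs).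

Lemma dfnetD V A B xs : dfnet V (A + B) xs = dfnet V A xs + dfnet V B xs.
Proof.
by rewrite /dfnet -big_split; apply: eq_bigr => i _; rewrite rowdotD !mulrDr.
Qed.

Lemma dfnetZ V c A xs : dfnet V (c *: A) xs = c * dfnet V A xs.
Proof.
by rewrite /dfnet mulr_sumr; apply: eq_bigr => i _; rewrite rowdotZ; ring.
Qed.

Lemma is_derive_fnet V D xs :
  is_derive (0 : RR^o) 1 ((fun r => fnet (V + r *: D) xs) : RR^o -> RR^o) (dfnet V D xs).
Proof.
have dphi := is_derive_hrelu hwidth_gt0.
apply: (is_derive_ext (f := fun r => \sum_(i < 2 * p)
    uw i * hrelu (hwidth p) (rowdot V i xs + r * rowdot D i xs))).
  by move=> r; apply: eq_bigr => i _; rewrite rowdotD rowdotZ.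
apply: is_derive_sum_fun => i /=.
by apply: is_derive_eq; rewrite mul0r addr0 scaler0 !add0r mul1r -[X in _ = _ * (_ * X)]mulr1.
Qed.

Lemma norm_sum_uw_le (e : 'I_(2 * p) -> RR) (b : RR) :
  (forall i, 0 <= e i <= b) -> `|\sum_(i < 2 * p) uw i * e i| <= b *+ p.
Proof.
move=> e_bd.
pose b_pos (i : 'I_(2 * p)) := if (i < p)%N then b else 0.
have sum_pos : \sum_(i < 2 * p) b_pos i = b *+ p.
  by rewrite -big_mkcond -(big_ord_widen _ (fun=> b)) ?leq_pmull // sumr_const card_ord.
have sum_neg : \sum_(i < 2 * p) (b - b_pos i) = b *+ p.
  by rewrite sumrB sum_pos sumr_const card_ord mul2n -addnn mulrnDr addrK.
rewrite ler_norml; apply/andP; split.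
  rewrite -sum_neg -sumrN; apply: ler_sum => i _.
  by rewrite /b_pos /uw; case: ifP => _; have := e_bd i; lra.
rewrite -sum_pos; apply: ler_sum => i _.
by rewrite /b_pos /uw; case: ifP => _; have := e_bd i; lra.
Qed.

Lemma dfnet_self_sub_fnet V xs : `|dfnet V V xs - fnet V xs| <= 1 / 2.
Proof.
have -> : dfnet V V xs - fnet V xs = \sum_(i < 2 * p) uw i *
    (dhrelu (hwidth p) (rowdot V i xs) * rowdot V i xs - hrelu (hwidth p) (rowdot V i xs)).
  by rewrite /dfnet /fnet -sumrB; apply: eq_bigr => i _; rewrite mulrBr.
have <- : hwidth p / 2 *+ p = 1 / 2.
  by rewrite /hwidth -mulr_natr; field; rewrite pnatr_eq0 -lt0n.
by apply: norm_sum_uw_le => i; exact: (hrelu_euler_gap hwidth_gt0).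
Qed.

End Network.

Section Loss.
Variables n p d : nat.
Hypothesis p_gt0 : (0 < p)%N.
Variables (x : 'I_n -> 'rV[RR]_d.+1) (y : 'I_n -> RR).
Implicit Types V D : 'M[RR]_(2 * p, d.+1).

Definition dloss V D : RR := n%:R^-1 *
  \sum_(s < n) - logistic_weight (y s * fnet V (x s)) * (y s * dfnet V D (x s)).

(* The [have]s put the derivatives in the context, where the instance search behind
   [is_derive_eq] finds them. *)
Lemma is_derive_loss V D :
  is_derive (0 : RR^o) 1 ((fun r => loss x y (V + r *: D)) : RR^o -> RR^o) (dloss V D).
Proof.
have dfn := is_derive_fnet p_gt0 V D.
have dlog := @is_derive_logistic_loss RR.
have dsum : is_derive (0 : RR^o) 1
    ((fun r => \sum_(s < n) logistic_loss (y s * fnet (V + r *: D) (x s))) : RR^o -> RR^o)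
    (\sum_(s < n) - logistic_weight (y s * fnet V (x s)) * (y s * dfnet V D (x s))).
  apply: is_derive_sum_fun => s /=.
  by apply: is_derive_eq; rewrite scale0r addr0.
by apply: is_derive_eq.
Qed.

Lemma gradM_loss V : gradM (loss x y) V = \matrix_(i, j) dloss V (delta_mx i j).
Proof.
apply/matrixP => i j; rewrite !mxE derive1E.
have dL := is_derive_loss V (delta_mx i j).
exact: derive_val.
Qed.

Lemma dlossD V : {morph dloss V : A B / A + B}.
Proof.
move=> A B; rewrite /dloss -mulrDr -big_split; congr (_ * _).
by apply: eq_bigr => s _ /=; rewrite dfnetD; ring.
Qed.

Lemma dlossZ V : scalable_for *%R (dloss V).
Proof.
move=> c A /=; rewrite /dloss mulrCA; congr (_ * _); rewrite mulr_sumr.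
by apply: eq_bigr => s _; rewrite dfnetZ; ring.
Qed.

Lemma mxdot_gradM_loss V : mxdot V (gradM (loss x y) V) = dloss V V.
Proof. by rewrite gradM_loss -linear_mxdotE //; [exact: dlossD | exact: dlossZ]. Qed.

Lemma loss_gt0 V : (0 < n)%N -> 0 < loss x y V.
Proof.
move=> n_gt0; rewrite /loss mulr_gt0 ?invr_gt0 ?ltr0n // (bigD1 (Ordinal n_gt0)) //.
apply: ltr_wpDr; last exact: logistic_loss_gt0.
by apply: sumr_ge0 => s _; exact/ltW/logistic_loss_gt0.
Qed.

Lemma dloss_self_ge V : (forall s, y s = 1 \/ y s = -1) ->
  n%:R^-1 * \sum_(s < n) logistic_weight (y s * fnet V (x s)) * (y s * fnet V (x s) - 1 / 2)
  <= - dloss V V.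
Proof.
move=> y_sign; rewrite /dloss -[X in _ <= X]mulrN -[X in _ <= _ * X]sumrN.
rewrite ler_wpM2l ?invr_ge0 ?ler0n //.
apply: ler_sum => s _; rewrite mulNr opprK ler_wpM2l ?logistic_weight_ge0 //.
have := dfnet_self_sub_fnet p_gt0 V (x s); rewrite ler_norml.
by case: (y_sign s) => ->; lra.
Qed.

Lemma small_loss_descent V (C1 : RR) :
  (2 <= n)%N -> 200 <= C1 -> (forall s, y s = 1 \/ y s = -1) ->
  loss x y V <= (n%:R `^ (1 + C1))^-1 ->
  5 / 6 * loss x y V * ln (loss x y V)^-1 <= - dloss V V.
Proof.
move=> n_ge2 C1_ge y_sign L_small.
set L := loss x y V in L_small *.
have L_mean : L = n%:R^-1 * \sum_(s < n) logistic_loss (y s * fnet V (x s)) by [].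
have n_ge2R : 2 <= n%:R :> RR by rewrite (ler_nat RR 2 n).
have L_gt0 : 0 < L by apply: loss_gt0; rewrite (ltn_trans _ n_ge2).
have sample_small s : logistic_loss (y s * fnet V (x s)) <= n%:R * L.
  rewrite L_mean mulrA mulfV ?gt_eqF ?ltr0n ?(ltn_trans _ n_ge2) // mul1r.
  rewrite (bigD1 s) //= lerDl.
  by apply: sumr_ge0 => i _; rewrite ltW ?logistic_loss_gt0.
have -> : 5 / 6 * L * ln L^-1 =
    n%:R^-1 * \sum_(s < n) 5 / 6 * logistic_loss (y s * fnet V (x s)) * ln L^-1.
  by rewrite -mulr_suml -mulr_sumr {1}L_mean; ring.
apply: le_trans _ (dloss_self_ge V y_sign); rewrite ler_wpM2l ?invr_ge0 ?ler0n //.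
apply: ler_sum => s _.
exact: sample_descent_bound n_ge2R C1_ge L_gt0 L_small (sample_small s).
Qed.

End Loss.

Theorem lemma6 :
  exists C0 : RR, forall C1 : RR, C0 <= C1 ->
  forall (n d p : nat) (x : 'I_n -> 'rV[RR]_(d.+1)) (y : 'I_n -> RR),
  (2 <= n)%N -> (1 <= p)%N ->
  (forall s, vnorm (x s) = 1) ->
  (forall s, y s = 1 \/ y s = -1) ->
  forall (V : nat -> 'M[RR]_(2 * p, d.+1)) (alpha : nat -> RR),
  (forall t, (1 <= t)%N ->
     V t.+1 = V t - alpha t *: gradM (loss x y) (V t)) ->
  forall t, (1 <= t)%N ->
  loss x y (V t) <= (n%:R `^ (1 + C1))^-1 ->
  frob (gradM (loss x y) (V t)) >=
    5 * loss x y (V t) * ln ((loss x y (V t))^-1) / (6 * frob (V t)).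
Proof.
exists 200 => C1 C1_ge n d p x y n_ge2 p_gt0 _ y_sign V alpha _ t _.
move: (V t) => W L_small.
have descent := small_loss_descent p_gt0 n_ge2 C1_ge y_sign L_small.
have := mxdot_le_frob (- W) (gradM (loss x y) W).
rewrite mxdotNl frobN mxdot_gradM_loss // => cauchy_schwarz.
(* For [V t = 0] the right-hand side is a division by zero, which is [0] in Rocq. *)
have [->|W_neq0] := eqVneq (frob W) 0; first by rewrite mulr0 invr0 mulr0 frob_ge0.
have W_gt0 : 0 < frob W by rewrite lt_def W_neq0 frob_ge0.
rewrite ler_pdivrMr ?mulr_gt0 //; nra.
Qed.
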